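(* The set $\{[A]\in\mathrm{MALG}: \Phi(A) \text{ is a complete } \boldsymbol{\Pi}^0_3 \text{ set}\}$ is comeager in $\mathrm{MALG}$.
   Context: $2^\omega$ is the Cantor space; $N_s=\{x: s\subset x\}$; $\mu$ the coin-tossing measure with $\mu(N_s)=2^{-\mathrm{lh}(s)}$. For measurable $A$, $\Phi(A)=\{x: \lim_n\mu(A\cap N_{x\restriction n})/\mu(N_{x\restriction n})=1\}$; $\Phi(A)$ depends only on the class $[A]$. $\mathrm{MALG}$ is the set of classes $[A]$ of measurable sets modulo null sets, with the Polish metric $\delta([A],[B])=\mu(A\triangle B)$. A set is complete $\boldsymbol{\Pi}^0_3$ if it is $F_{\sigma\delta}$ and every $F_{\sigma\delta}$ subset of $2^\omega$ is a continuous preimage of it (equivalently it is $F_{\sigma\delta}$ but not $G_{\delta\sigma}$). *)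

From Stdlib Require Import Reals List.
From Coquelicot Require Import Coquelicot.
Open Scope R_scope.

Definition cantor := nat -> bool.

Definition prefix (x : cantor) (n : nat) : list bool := List.map x (List.seq 0 n).

Definition N (s : list bool) (x : cantor) : Prop := prefix x (length s) = s.

Definition cover_sums (A : cantor -> Prop) (r : R) : Prop :=
  exists s : nat -> list bool,
    (forall x, A x -> exists k, N (s k) x) /\
    is_series (fun k => (/ 2) ^ length (s k)) r.

(** Outer measure induced by mu(N_s) = 2^{-lh(s)}; on measurable sets it is
    the coin-tossing measure mu. *)
Definition mu (A : cantor -> Prop) : R := real (Glb_Rbar (cover_sums A)).

Definition measurable (A : cantor -> Prop) : Prop :=
  forall E : cantor -> Prop,
    mu E = mu (fun x => E x /\ A x) + mu (fun x => E x /\ ~ A x).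

Definition Phi (A : cantor -> Prop) (x : cantor) : Prop :=
  is_lim_seq (fun n => mu (fun y => A y /\ N (prefix x n) y) / mu (N (prefix x n))) 1.

Definition open_set (U : cantor -> Prop) : Prop :=
  forall x, U x -> exists n, forall y, N (prefix x n) y -> U y.
Definition closed_set (F : cantor -> Prop) : Prop := open_set (fun x => ~ F x).

Definition Fsigmadelta (B : cantor -> Prop) : Prop :=
  exists F : nat -> nat -> cantor -> Prop,
    (forall m k, closed_set (F m k)) /\
    (forall x, B x <-> forall m, exists k, F m k x).

Definition continuous_map (f : cantor -> cantor) : Prop :=
  forall x n, exists m, forall y, N (prefix x m) y -> f y n = f x n.

Definition complete_Pi03 (C : cantor -> Prop) : Prop :=
  Fsigmadelta C /\
  forall B, Fsigmadelta B ->
    exists f, continuous_map f /\ forall x, B x <-> C (f x).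

(** MALG, presented as the pseudometric space of measurable sets with
    delta(A,B) = mu(A triangle B); its metric quotient is MALG. *)
Definition MALGpt := { A : cantor -> Prop | measurable A }.

Definition delta (a b : MALGpt) : R :=
  mu (fun x => (proj1_sig a x /\ ~ proj1_sig b x) \/ (proj1_sig b x /\ ~ proj1_sig a x)).

Definition malg_open (O : MALGpt -> Prop) : Prop :=
  forall a, O a -> exists eps, 0 < eps /\ forall b, delta a b < eps -> O b.

Definition malg_dense (D : MALGpt -> Prop) : Prop :=
  forall a eps, 0 < eps -> exists b, D b /\ delta a b < eps.

Definition malg_comeager (S : MALGpt -> Prop) : Prop :=
  exists D : nat -> MALGpt -> Prop,
    (forall k, malg_open (D k) /\ malg_dense (D k)) /\
    (forall a, (forall k, D k a) -> S a).

(* For each [k], the sets [A] that are close, at the scale of the depth of [T], to a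
   clopen set [T] into which small "gadgets" have been grafted at depth [k] form a dense
   open subset of MALG, so a generic [A] has such approximations for every [k].  A gadget
   offers, for each [m <= k], a path along which the density of [A] dips to about
   [1 - 2^-(m+1)] and then returns to about 1; the way down to a gadget can be chosen so
   that the density stays high.  Hence any sequence of optional events can be written
   into a point that descends, stage by stage, into gadgets of increasing level, taking
   the dip of depth [2^-(m+1)] at each event [Some m]: this point is a density point of
   [A] iff the events tend to infinity.  Every F_sigma delta set reduces continuously to
   this divergence condition, and [Phi A] is itself F_sigma delta. *)

From Pilot Require Import Defs.
From Stdlib Require Import Reals List.
From Coquelicot Require Import Coquelicot.
From Stdlib Require Import Lra Lia.
From Stdlib Require Import ClassicalEpsilon Classical FunctionalExtensionality PropExtensionality.
Open Scope R_scope.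

Notation Ns := Defs.N.

Definition dyad (n : nat) : R := (/ 2) ^ n.

Lemma dyad_pos n : 0 < dyad n.
Proof. apply pow_lt. lra. Qed.

Lemma dyad_0 : dyad 0 = 1.
Proof. reflexivity. Qed.

Lemma dyad_S n : dyad (S n) = dyad n / 2.
Proof. unfold dyad. simpl. lra. Qed.

Lemma dyad_add m n : dyad (m + n) = dyad m * dyad n.
Proof. apply pow_add. Qed.

Lemma dyad_le m n : (m <= n)%nat -> dyad n <= dyad m.
Proof. induction 1; [lra|]. rewrite dyad_S. pose proof (dyad_pos m0). lra. Qed.

Lemma dyad_le1 n : dyad n <= 1.
Proof. rewrite <- dyad_0. apply dyad_le. lia. Qed.

Lemma dyad_small eps : 0 < eps -> exists p, dyad p < eps.
Proof.
  intros Heps.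
  destruct (pow_lt_1_zero (/2) ltac:(rewrite Rabs_pos_eq; lra) eps Heps) as [p Hp].
  exists p. specialize (Hp p (le_n _)). rewrite Rabs_pos_eq in Hp; [exact Hp|].
  apply pow_le; lra.
Qed.

Lemma le_of_le_add_dyad a b : (forall p, a <= b + dyad p) -> a <= b.
Proof.
  intros H. apply Rnot_lt_le. intros Hlt.
  destruct (dyad_small (a - b)) as [p Hp]; [lra|]. specialize (H p). lra.
Qed.

Lemma is_series_geom_half : is_series dyad 2.
Proof.
  replace 2 with (/ (1 - / 2)) by field.
  apply is_series_geom. rewrite Rabs_pos_eq; lra.
Qed.

Lemma is_series_dyad_shift p : is_series (fun k => dyad (k + p)) (2 * dyad p).
Proof.
  pose proof (is_series_scal_l (dyad p) _ _ is_series_geom_half) as H.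
  replace (2 * dyad p) with (scal (dyad p) 2) by (change (dyad p * 2 = 2 * dyad p); ring).
  eapply is_series_ext; [|exact H].
  intros n. rewrite dyad_add. change (dyad p * dyad n = dyad n * dyad p). ring.
Qed.

Lemma is_series_partial_le (a : nat -> R) l n :
  (forall k, 0 <= a k) -> is_series a l -> sum_f_R0 a n <= l.
Proof. intros Ha Hl. apply sum_incr; [|exact Ha]. apply is_series_Reals, Hl. Qed.

Lemma is_series_nonneg (a : nat -> R) l : (forall k, 0 <= a k) -> is_series a l -> 0 <= l.
Proof.
  intros Ha Hl. apply Rle_trans with (sum_f_R0 a 0); [apply Ha|].
  apply is_series_partial_le; assumption.
Qed.

Lemma is_series_le_bound (a b : nat -> R) lb :
  (forall k, 0 <= a k <= b k) -> is_series b lb ->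
  exists la, is_series a la /\ la <= lb.
Proof.
  intros Hab Hb.
  assert (Ea : ex_series a).
  { apply (@ex_series_le R_AbsRing R_CompleteNormedModule a b); [|exists lb; exact Hb].
    intros n. change (Rabs (a n) <= b n). rewrite Rabs_pos_eq; apply Hab. }
  exists (Series a). split; [apply Series_correct, Ea|].
  rewrite <- (is_series_unique b lb Hb). apply Series_le; [exact Hab|exists lb; exact Hb].
Qed.

Lemma is_series_le (a b : nat -> R) la lb :
  (forall k, 0 <= a k <= b k) -> is_series a la -> is_series b lb -> la <= lb.
Proof.
  intros Hab Ha Hb. rewrite <- (is_series_unique a la Ha), <- (is_series_unique b lb Hb).
  apply Series_le; [exact Hab|exists lb; exact Hb].
Qed.

Definition interleave {A} (a b : nat -> A) (k : nat) : A :=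
  if Nat.even k then a (Nat.div2 k) else b (Nat.div2 k).

Lemma interleave_even {A} (a b : nat -> A) k : interleave a b (2 * k) = a k.
Proof. unfold interleave. rewrite Nat.even_mul, Nat.div2_double. reflexivity. Qed.

Lemma interleave_odd {A} (a b : nat -> A) k : interleave a b (S (2 * k)) = b k.
Proof.
  unfold interleave. rewrite Nat.even_succ, Nat.odd_mul, Nat.div2_succ_double. reflexivity.
Qed.

Lemma sum_interleave (a b : nat -> R) n :
  sum_f_R0 (interleave a b) (S (2 * n)) = sum_f_R0 a n + sum_f_R0 b n.
Proof.
  induction n as [|n IH].
  - simpl. unfold interleave. simpl. lra.
  - replace (S (2 * S n)) with (S (S (S (2 * n)))) by lia.
    change (sum_f_R0 (interleave a b) (S (S (S (2 * n))))) with
      (sum_f_R0 (interleave a b) (S (2 * n)) + interleave a b (S (S (2 * n)))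
       + interleave a b (S (S (S (2 * n))))).
    rewrite IH. replace (S (S (2 * n))) with (2 * S n)%nat by lia.
    rewrite interleave_even, interleave_odd. simpl. lra.
Qed.

Lemma is_series_interleave (a b : nat -> R) la lb :
  (forall k, 0 <= a k) -> (forall k, 0 <= b k) ->
  is_series a la -> is_series b lb -> is_series (interleave a b) (la + lb).
Proof.
  intros Ha Hb Sa Sb.
  apply is_series_Reals. apply is_series_Reals in Sa, Sb.
  assert (mono : forall p q, (p <= q)%nat ->
    sum_f_R0 (interleave a b) p <= sum_f_R0 (interleave a b) q).
  { intros p q Hpq. induction Hpq as [|q _ IH]; [lra|]. simpl.
    assert (0 <= interleave a b (S q)) by (unfold interleave; destruct Nat.even; auto). lra. }
  intros eps Heps.
  destruct (Sa (eps / 2)) as [Na HNa]; [lra|].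
  destruct (Sb (eps / 2)) as [Nb HNb]; [lra|].
  exists (S (2 * S (Na + Nb))). intros m Hm.
  (* [m] lies between the odd indices [2(n-1)+1] and [2n+1] with [n = m/2]. *)
  set (n := Nat.div2 m).
  assert (Hmn := Nat.div2_odd m). fold n in Hmn.
  assert (Hn : (Na + Nb < n)%nat) by (destruct (Nat.odd m); simpl in *; lia).
  assert (lo := mono (S (2 * (n - 1))) m ltac:(destruct (Nat.odd m); simpl in *; lia)).
  assert (hi := mono m (S (2 * n)) ltac:(destruct (Nat.odd m); simpl in *; lia)).
  rewrite sum_interleave in lo, hi.
  assert (A1 := HNa n ltac:(lia)). assert (A2 := HNa (n - 1)%nat ltac:(lia)).
  assert (B1 := HNb n ltac:(lia)). assert (B2 := HNb (n - 1)%nat ltac:(lia)).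
  unfold Rdist, R_dist in *. apply Rabs_def2 in A1, A2, B1, B2. apply Rabs_def1; lra.
Qed.

(** * The coin-tossing outer measure *)

Lemma cover_sums_nonneg A r : cover_sums A r -> 0 <= r.
Proof. intros [s [_ Hs]]. exact (is_series_nonneg _ _ (fun k => Rlt_le _ _ (dyad_pos _)) Hs). Qed.

Lemma cover_sums_2 A : cover_sums A 2.
Proof.
  exists (fun k => repeat false k). split.
  - intros x _. exists 0%nat. reflexivity.
  - eapply is_series_ext; [|exact is_series_geom_half].
    intros n. unfold dyad. rewrite repeat_length. reflexivity.
Qed.

Lemma Glb_cover_sums A : Glb_Rbar (cover_sums A) = Finite (mu A).
Proof.
  unfold mu. destruct (Glb_Rbar_correct (cover_sums A)) as [Hlb Hglb].
  assert (H0 : Rbar_le 0 (Glb_Rbar (cover_sums A))).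
  { apply Hglb. intros r Hr. exact (cover_sums_nonneg A r Hr). }
  assert (H2 : Rbar_le (Glb_Rbar (cover_sums A)) 2) by apply Hlb, cover_sums_2.
  destruct (Glb_Rbar (cover_sums A)); simpl in *; tauto.
Qed.

Lemma mu_le_cover A r : cover_sums A r -> mu A <= r.
Proof.
  intros Hr. destruct (Glb_Rbar_correct (cover_sums A)) as [Hlb _].
  rewrite Glb_cover_sums in Hlb. exact (Hlb r Hr).
Qed.

Lemma mu_ge_lower_bound A c : (forall r, cover_sums A r -> c <= r) -> c <= mu A.
Proof.
  intros H. destruct (Glb_Rbar_correct (cover_sums A)) as [_ Hglb].
  rewrite Glb_cover_sums in Hglb. apply (Hglb (Finite c)). intros r Hr. exact (H r Hr).
Qed.

Lemma mu_nonneg A : 0 <= mu A.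
Proof. apply mu_ge_lower_bound, cover_sums_nonneg. Qed.

Lemma mu_approx_cover A eps : 0 < eps -> exists r, cover_sums A r /\ r < mu A + eps.
Proof.
  intros Heps. apply NNPP. intros Hnot.
  enough (mu A + eps <= mu A) by lra.
  apply mu_ge_lower_bound. intros r Hr. apply Rnot_lt_le. intros Hlt. apply Hnot. eauto.
Qed.

Lemma mu_ext A B : (forall x, A x <-> B x) -> mu A = mu B.
Proof.
  intros H. replace B with A; [reflexivity|].
  apply functional_extensionality. intros x. apply propositional_extensionality, H.
Qed.

Lemma mu_mono A B : (forall x, A x -> B x) -> mu A <= mu B.
Proof.
  intros H. apply mu_ge_lower_bound. intros r [s [Hc Hs]].
  apply mu_le_cover. exists s. split; [|exact Hs]. intros x Ax. exact (Hc x (H x Ax)).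
Qed.

Lemma mu_union_le A B : mu (fun x => A x \/ B x) <= mu A + mu B.
Proof.
  apply le_of_le_add_dyad. intros p.
  assert (Hp := dyad_pos p).
  destruct (mu_approx_cover A (dyad p / 2)) as [ra [[sa [Ca Sa]] Ha]]; [lra|].
  destruct (mu_approx_cover B (dyad p / 2)) as [rb [[sb [Cb Sb]] Hb]]; [lra|].
  enough (mu (fun x => A x \/ B x) <= ra + rb) by lra.
  apply mu_le_cover. exists (interleave sa sb). split.
  - intros x [Ax|Bx].
    + destruct (Ca x Ax) as [k Hk]. exists (2 * k)%nat. rewrite interleave_even. exact Hk.
    + destruct (Cb x Bx) as [k Hk]. exists (S (2 * k)). rewrite interleave_odd. exact Hk.
  - eapply is_series_ext;
      [|apply (is_series_interleave (fun k => dyad (length (sa k))) (fun k => dyad (length (sb k))));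
        auto; intros; apply Rlt_le, dyad_pos].
    intros n. unfold interleave. destruct (Nat.even n); reflexivity.
Qed.

Lemma mu_Ns_le s : mu (Ns s) <= dyad (length s).
Proof.
  apply le_of_le_add_dyad. intros p.
  apply mu_le_cover. exists (fun k => match k with 0%nat => s | S k => repeat false (k + S p) end).
  split; [intros x Hx; exists 0%nat; exact Hx|].
  apply is_series_decr_1.
  match goal with |- is_series _ ?l => replace l with (2 * dyad (S p)) end.
  2: { rewrite dyad_S. change (2 * (dyad p / 2) = dyad (length s) + dyad p + - dyad (length s)). lra. }
  eapply is_series_ext; [|apply (is_series_dyad_shift (S p))].
  intros n. simpl. unfold dyad. rewrite repeat_length. reflexivity.
Qed.

Lemma mu_empty E : (forall x, ~ E x) -> mu E = 0.
Proof.
  intros HE. apply Rle_antisym; [|apply mu_nonneg].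
  apply le_of_le_add_dyad. intros p.
  eapply Rle_trans; [apply (mu_mono _ (Ns (repeat false p))); intros x Ex; contradiction (HE x)|].
  eapply Rle_trans; [apply mu_Ns_le|]. rewrite repeat_length. lra.
Qed.

Definition shift (x : cantor) : cantor := fun n => x (S n).
Definition scons (b : bool) (x : cantor) : cantor :=
  fun n => match n with 0%nat => b | S n => x n end.
Definition sapp (t : list bool) (y : cantor) : cantor := fold_right scons y t.

Lemma prefix_length x n : length (prefix x n) = n.
Proof. unfold prefix. rewrite length_map, length_seq. reflexivity. Qed.

Lemma prefix_S x n : prefix x (S n) = x 0%nat :: prefix (shift x) n.
Proof. unfold prefix. simpl. rewrite <- seq_shift, map_map. reflexivity. Qed.

Lemma prefix_snoc x n : prefix x (S n) = prefix x n ++ x n :: nil.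
Proof. unfold prefix. rewrite seq_S, map_app. reflexivity. Qed.

Lemma scons_shift x : scons (x 0%nat) (shift x) = x.
Proof. apply functional_extensionality. intros [|n]; reflexivity. Qed.

Lemma Ns_nil x : Ns nil x.
Proof. reflexivity. Qed.

Lemma Ns_cons b s x : Ns (b :: s) x <-> x 0%nat = b /\ Ns s (shift x).
Proof.
  unfold Defs.N. simpl length. rewrite prefix_S. split.
  - intros Heq. injection Heq. auto.
  - intros [-> H]. rewrite H. reflexivity.
Qed.

Lemma Ns_snoc t b x : Ns (t ++ b :: nil) x <-> Ns t x /\ x (length t) = b.
Proof.
  unfold Defs.N. rewrite length_app, Nat.add_1_r, prefix_snoc. split.
  - intros H. apply app_inj_tail in H. destruct H as [-> ->]. auto.
  - intros [-> ->]. reflexivity.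
Qed.

Definition cons_set (b : bool) (X : cantor -> Prop) : cantor -> Prop :=
  fun x => x 0%nat = b /\ X (shift x).

Definition fiber (E : cantor -> Prop) (t : list bool) : cantor -> Prop := fun y => E (sapp t y).

Lemma mu_cons_set_le b X : mu (cons_set b X) <= mu X / 2.
Proof.
  enough (2 * mu (cons_set b X) <= mu X) by lra.
  apply mu_ge_lower_bound. intros r [s [Hc Hs]].
  enough (mu (cons_set b X) <= r / 2) by lra.
  apply mu_le_cover. exists (fun k => b :: s k). split.
  - intros x [Hb HX]. destruct (Hc _ HX) as [k Hk]. exists k. apply Ns_cons. auto.
  - replace (r / 2) with (scal (/ 2) r) by (change (/ 2 * r = r / 2); lra).
    eapply is_series_ext; [|exact (is_series_scal_l (/ 2) _ _ Hs)]. reflexivity.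
Qed.

Lemma mu_cons_set_ge b X : mu X / 2 <= mu (cons_set b X).
Proof.
  apply mu_ge_lower_bound. intros r [s [Hc Hs]].
  assert (H2 : is_series (fun k => 2 * dyad (length (s k))) (2 * r)).
  { eapply is_series_ext; [|exact (is_series_scal_l 2 _ _ Hs)]. reflexivity. }
  assert (Htl : forall k, 0 <= dyad (length (tl (s k))) <= 2 * dyad (length (s k))).
  { intros k. split; [apply Rlt_le, dyad_pos|].
    destruct (s k); simpl; [rewrite dyad_0; lra|]. rewrite dyad_S. lra. }
  destruct (is_series_le_bound _ _ _ Htl H2) as [l [Hl Hle]].
  enough (mu X <= l) by lra.
  apply mu_le_cover. exists (fun k => tl (s k)). split; [|exact Hl].
  intros y Hy. destruct (Hc (scons b y)) as [k Hk]; [split; [reflexivity|exact Hy]|].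
  exists k. destruct (s k) as [|c t]; [apply Ns_nil|]. apply Ns_cons in Hk. apply Hk.
Qed.

Lemma mu_cons_set b X : mu (cons_set b X) = mu X / 2.
Proof. pose proof (mu_cons_set_le b X). pose proof (mu_cons_set_ge b X). lra. Qed.

(* A string of the cover either starts with [b], and its tail covers part of the
   [b]-fiber, or it does not, and is replaced by a string of negligible weight. *)
Definition fiber_cover (s : nat -> list bool) (p : nat) (b : bool) (k : nat) : list bool :=
  match s k with
  | nil => nil
  | c :: t => if Bool.eqb c b then t else repeat false (k + p)
  end.

Lemma fiber_cover_covers E s p b :
  (forall x, E x -> exists k, Ns (s k) x) ->
  forall y, fiber E (b :: nil) y -> exists k, Ns (fiber_cover s p b k) y.
Proof.
  intros Hc y Hy. destruct (Hc _ Hy) as [k Hk]. exists k. unfold fiber_cover.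
  destruct (s k) as [|c t]; [apply Ns_nil|].
  apply Ns_cons in Hk. destruct Hk as [Hb Hk]. simpl in Hb. subst c.
  rewrite Bool.eqb_reflx. exact Hk.
Qed.

Lemma fiber_cover_weights s p k :
  dyad (length (fiber_cover s p false k)) + dyad (length (fiber_cover s p true k))
    <= 2 * dyad (length (s k)) + dyad (k + p).
Proof.
  unfold fiber_cover. pose proof (dyad_pos (k + p)).
  destruct (s k) as [|c t]; simpl length; [rewrite dyad_0; lra|].
  rewrite dyad_S. destruct c; simpl; rewrite repeat_length; lra.
Qed.

Lemma mu_fiber_sum_le E : mu (fiber E (false :: nil)) + mu (fiber E (true :: nil)) <= 2 * mu E.
Proof.
  enough ((mu (fiber E (false :: nil)) + mu (fiber E (true :: nil))) / 2 <= mu E) by lra.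
  apply mu_ge_lower_bound. intros r [s [Hc Hs]]. apply le_of_le_add_dyad. intros p.
  set (a b k := dyad (length (fiber_cover s p b k))).
  set (bound k := 2 * dyad (length (s k)) + dyad (k + p)).
  assert (Hbound : is_series bound (2 * r + 2 * dyad p)).
  { apply (is_series_plus (fun k => 2 * dyad (length (s k))) (fun k => dyad (k + p))).
    - eapply is_series_ext; [|exact (is_series_scal_l 2 _ _ Hs)]. reflexivity.
    - apply is_series_dyad_shift. }
  assert (Ha : forall b k, 0 <= a b k <= bound k).
  { intros b k. pose proof (fiber_cover_weights s p k). pose proof (dyad_pos (length (fiber_cover s p false k))).
    pose proof (dyad_pos (length (fiber_cover s p true k))). unfold a, bound. destruct b; lra. }
  destruct (is_series_le_bound _ _ _ (Ha false) Hbound) as [l0 [H0 _]].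
  destruct (is_series_le_bound _ _ _ (Ha true) Hbound) as [l1 [H1 _]].
  assert (Hsum : l0 + l1 <= 2 * r + 2 * dyad p).
  { apply (is_series_le (fun k => a false k + a true k) bound);
      [|exact (is_series_plus _ _ _ _ H0 H1)|exact Hbound].
    intros k. pose proof (Ha false k). pose proof (Ha true k). split; [lra|apply fiber_cover_weights]. }
  assert (E0 : mu (fiber E (false :: nil)) <= l0).
  { apply mu_le_cover. exists (fiber_cover s p false). split; [apply fiber_cover_covers, Hc|exact H0]. }
  assert (E1 : mu (fiber E (true :: nil)) <= l1).
  { apply mu_le_cover. exists (fiber_cover s p true). split; [apply fiber_cover_covers, Hc|exact H1]. }
  lra.
Qed.

Lemma mu_split E : mu E = (mu (fiber E (false :: nil)) + mu (fiber E (true :: nil))) / 2.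
Proof.
  apply Rle_antisym; [|pose proof (mu_fiber_sum_le E); lra].
  eapply Rle_trans.
  { apply (mu_mono _ (fun x => cons_set false (fiber E (false :: nil)) x \/
                              cons_set true (fiber E (true :: nil)) x)).
    intros x Ex. unfold cons_set, fiber. simpl.
    destruct (x 0%nat) eqn:Hx0; [right|left]; split; auto; rewrite <- Hx0, scons_shift; exact Ex. }
  eapply Rle_trans; [apply mu_union_le|]. rewrite !mu_cons_set. lra.
Qed.

Definition weight (l : list (list bool)) : R := fold_right (fun s acc => dyad (length s) + acc) 0 l.

Lemma weight_nonneg l : 0 <= weight l.
Proof. induction l as [|s l IH]; simpl; [lra|]. pose proof (dyad_pos (length s)). lra. Qed.

Lemma weight_app l1 l2 : weight (l1 ++ l2) = weight l1 + weight l2.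
Proof. induction l1; simpl; lra. Qed.

Lemma weight_In s l : In s l -> dyad (length s) <= weight l.
Proof.
  induction l as [|s' l IH]; simpl; [tauto|]. pose proof (weight_nonneg l).
  intros [->|Hin]; [lra|]. specialize (IH Hin). pose proof (dyad_pos (length s')). lra.
Qed.

Lemma weight_map_seq (s : nat -> list bool) K :
  weight (map s (seq 0 (S K))) = sum_f_R0 (fun k => dyad (length (s k))) K.
Proof.
  induction K as [|K IH]; [simpl; lra|].
  rewrite seq_S, map_app, weight_app, IH. simpl. lra.
Qed.

Definition fiber_list (b : bool) (l : list (list bool)) : list (list bool) :=
  flat_map (fun s => match s with
                     | nil => nil
                     | c :: t => if Bool.eqb c b then t :: nil else nil
                     end) l.

Lemma weight_fiber_list l :
  ~ In nil l -> weight l = (weight (fiber_list false l) + weight (fiber_list true l)) / 2.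
Proof.
  induction l as [|s l IH]; intros Hnil; [simpl; lra|].
  simpl. rewrite IH by (intros H; apply Hnil; right; exact H).
  destruct s as [|b s]; [exfalso; apply Hnil; left; reflexivity|].
  destruct b; simpl; rewrite dyad_S; lra.
Qed.

Lemma In_fiber_list b s l : In (b :: s) l -> In s (fiber_list b l).
Proof.
  intros H. apply in_flat_map. exists (b :: s). split; [exact H|].
  rewrite Bool.eqb_reflx. left; reflexivity.
Qed.

Lemma fiber_list_length b l n :
  (forall s, In s l -> (length s <= S n)%nat) -> forall s, In s (fiber_list b l) -> (length s <= n)%nat.
Proof.
  intros H s Hs. apply in_flat_map in Hs. destruct Hs as [[|c t] [Ht Hin]]; [destruct Hin|].
  specialize (H _ Ht). simpl in H. destruct (Bool.eqb c b); [|destruct Hin].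
  destruct Hin as [<-|[]]. lia.
Qed.

Lemma weight_finite_cover_ge1 n l :
  (forall s, In s l -> (length s <= n)%nat) ->
  (forall x, exists s, In s l /\ Ns s x) -> 1 <= weight l.
Proof.
  revert l. induction n as [|n IH]; intros l Hlen Hcov.
  - destruct (Hcov (fun _ => false)) as [[|b s] [Hs _]]; [exact (weight_In _ _ Hs)|].
    specialize (Hlen _ Hs). simpl in Hlen. lia.
  - destruct (in_dec (list_eq_dec Bool.bool_dec) nil l) as [Hnil|Hnil]; [exact (weight_In _ _ Hnil)|].
    rewrite (weight_fiber_list l Hnil).
    enough (forall b, 1 <= weight (fiber_list b l)) by (pose proof (H false); pose proof (H true); lra).
    intros b. apply IH; [apply fiber_list_length, Hlen|].
    intros y. destruct (Hcov (scons b y)) as [[|c s] [Hs Hy]]; [contradiction|].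
    apply Ns_cons in Hy. destruct Hy as [Hc Hy]. simpl in Hc. subst c.
    exists s. split; [apply In_fiber_list, Hs|exact Hy].
Qed.

Section Compactness.

Variable s : nat -> list bool.

Definition escapes (t : list bool) : Prop :=
  forall K, exists x, Ns t x /\ forall k, (k <= K)%nat -> ~ Ns (s k) x.

Lemma escapes_snoc t : escapes t -> escapes (t ++ false :: nil) \/ escapes (t ++ true :: nil).
Proof.
  intros H. apply NNPP. intros Hn. apply not_or_and in Hn. destruct Hn as [H0 H1].
  apply not_all_ex_not in H0, H1. destruct H0 as [K0 H0], H1 as [K1 H1].
  destruct (H (max K0 K1)) as [x [Ht Hx]].
  destruct (x (length t)) eqn:Hb; [apply H1|apply H0]; exists x;
    (split; [apply Ns_snoc; auto|intros k Hk; apply Hx; lia]).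
Qed.

Fixpoint escape_path (n : nat) : list bool :=
  match n with
  | 0%nat => nil
  | S n => escape_path n ++
      (if excluded_middle_informative (escapes (escape_path n ++ false :: nil)) then false else true) :: nil
  end.

Lemma escape_path_length n : length (escape_path n) = n.
Proof. induction n; simpl; [reflexivity|]. rewrite length_app. simpl. lia. Qed.

Lemma escape_path_escapes n : escapes nil -> escapes (escape_path n).
Proof.
  intros H0. induction n as [|n IH]; simpl; [exact H0|].
  destruct (excluded_middle_informative (escapes (escape_path n ++ false :: nil))); [assumption|].
  destruct (escapes_snoc _ IH); tauto.
Qed.

Definition escape_point : cantor := fun n => nth n (escape_path (S n)) false.

Lemma prefix_escape_point n : prefix escape_point n = escape_path n.
Proof.
  induction n as [|n IH]; [reflexivity|].
  rewrite prefix_snoc, IH. simpl escape_path at 2. do 2 f_equal.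
  unfold escape_point. simpl escape_path.
  rewrite app_nth2; rewrite escape_path_length; [|lia]. rewrite Nat.sub_diag. reflexivity.
Qed.

(* Konig's lemma: the point built by always extending an escaping string escapes every [N_(s k)]. *)
Lemma cover_finite_subcover :
  (forall x, exists k, Ns (s k) x) -> exists K, forall x, exists k, (k <= K)%nat /\ Ns (s k) x.
Proof.
  intros Hcov. apply NNPP. intros Hn.
  assert (Hnil : escapes nil).
  { intros K. apply NNPP. intros HK. apply Hn. exists K. intros x. apply NNPP. intros Hx.
    apply HK. exists x. split; [apply Ns_nil|]. intros k Hk Hs. apply Hx. eauto. }
  destruct (Hcov escape_point) as [k Hk].
  destruct (escape_path_escapes (length (s k)) Hnil k) as [y [Hy Hny]].
  apply (Hny k (le_n _)). unfold Defs.N in *.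
  rewrite prefix_escape_point in Hk. rewrite escape_path_length, Hk in Hy. exact Hy.
Qed.

End Compactness.

Lemma mu_full : mu (fun _ => True) = 1.
Proof.
  apply Rle_antisym.
  - eapply Rle_trans; [apply (mu_mono _ (Ns nil)); intros; apply Ns_nil|apply mu_Ns_le].
  - apply mu_ge_lower_bound. intros r [s [Hc Hs]].
    destruct (cover_finite_subcover s (fun x => Hc x I)) as [K HK].
    set (l := map s (seq 0 (S K))).
    apply Rle_trans with (weight l).
    + apply (weight_finite_cover_ge1 (list_max (map (@length bool) l))).
      * intros t Ht. pose proof (proj1 (list_max_le (map (@length bool) l) _) (le_n _)) as Hmax.
        rewrite Forall_forall in Hmax. apply Hmax, in_map, Ht.
      * intros x. destruct (HK x) as [k [Hk Hx]]. exists (s k). split; [|exact Hx].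
        apply in_map, in_seq. lia.
    + unfold l. rewrite weight_map_seq. apply is_series_partial_le; [|exact Hs].
      intros; apply Rlt_le, dyad_pos.
Qed.

Lemma mu_inter_Ns t E : mu (fun x => E x /\ Ns t x) = dyad (length t) * mu (fiber E t).
Proof.
  revert E. induction t as [|b t IH]; intros E.
  - simpl length. rewrite dyad_0, Rmult_1_l. apply mu_ext. intros x. unfold fiber. simpl.
    split; [tauto|]. intros; split; [assumption|apply Ns_nil].
  - rewrite mu_split.
    assert (Hother : mu (fiber (fun x => E x /\ Ns (b :: t) x) (negb b :: nil)) = 0).
    { apply mu_empty. intros y [_ Hy]. apply Ns_cons in Hy. destruct Hy as [Hy _].
      destruct b; discriminate. }
    assert (Hsame : mu (fiber (fun x => E x /\ Ns (b :: t) x) (b :: nil))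
                    = dyad (length t) * mu (fiber E (b :: t))).
    { change (fiber E (b :: t)) with (fiber (fiber E (b :: nil)) t). rewrite <- IH.
      apply mu_ext. intros y. unfold fiber. rewrite Ns_cons. simpl. tauto. }
    simpl length. rewrite dyad_S. destruct b; simpl negb in Hother; rewrite Hother, Hsame; lra.
Qed.

Lemma mu_Ns t : mu (Ns t) = dyad (length t).
Proof.
  rewrite (mu_ext _ (fun x => True /\ Ns t x)) by tauto.
  rewrite mu_inter_Ns. unfold fiber. rewrite mu_full. lra.
Qed.

Definition density (E : cantor -> Prop) (t : list bool) : R := mu (fiber E t).

Lemma density_prefix E x n :
  mu (fun y => E y /\ Ns (prefix x n) y) / mu (Ns (prefix x n)) = density E (prefix x n).
Proof.
  rewrite mu_inter_Ns, mu_Ns. unfold density.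
  pose proof (dyad_pos (length (prefix x n))). field. lra.
Qed.

Lemma density_le1 E t : density E t <= 1.
Proof. unfold density. rewrite <- mu_full. apply mu_mono. auto. Qed.

(** * Clopen sets as finite trees *)

(* Finite binary trees with boolean leaves code the clopen subsets of [2^omega]. *)
Inductive tree := Leaf (b : bool) | Node (t0 t1 : tree).

Fixpoint tmem (T : tree) (x : cantor) : Prop :=
  match T with
  | Leaf b => b = true
  | Node t0 t1 => if x 0%nat then tmem t1 (shift x) else tmem t0 (shift x)
  end.

Fixpoint tval (T : tree) : R :=
  match T with
  | Leaf b => if b then 1 else 0
  | Node t0 t1 => (tval t0 + tval t1) / 2
  end.

Fixpoint tdepth (T : tree) : nat :=
  match T with Leaf _ => 0%nat | Node t0 t1 => S (max (tdepth t0) (tdepth t1)) end.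

Fixpoint tsub (T : tree) (t : list bool) {struct t} : tree :=
  match t, T with
  | nil, _ => T
  | _, Leaf b => Leaf b
  | b :: t, Node t0 t1 => tsub (if b then t1 else t0) t
  end.

Lemma tsub_Leaf c t : tsub (Leaf c) t = Leaf c.
Proof. destruct t; reflexivity. Qed.

Lemma tsub_app T t u : tsub T (t ++ u) = tsub (tsub T t) u.
Proof.
  revert T. induction t as [|b t IH]; intros T; [reflexivity|].
  destruct T as [c|t0 t1]; [rewrite !tsub_Leaf; reflexivity|apply IH].
Qed.

Lemma tmem_tsub T t y : tmem (tsub T t) y <-> tmem T (sapp t y).
Proof.
  revert T. induction t as [|b t IH]; intros T; [reflexivity|].
  destruct T as [c|t0 t1]; [rewrite tsub_Leaf; reflexivity|].
  simpl. destruct b; apply IH.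
Qed.

Lemma mu_tmem T : mu (tmem T) = tval T.
Proof.
  induction T as [[|]|t0 IH0 t1 IH1].
  - simpl tval. rewrite <- mu_full. apply mu_ext. simpl. tauto.
  - apply mu_empty. simpl. discriminate.
  - rewrite mu_split. simpl. rewrite <- IH0, <- IH1. reflexivity.
Qed.

Lemma tval_le1 T : tval T <= 1.
Proof. rewrite <- mu_tmem, <- mu_full. apply mu_mono. auto. Qed.

Lemma tmem_measurable T : measurable (tmem T).
Proof.
  induction T as [[|]|t0 IH0 t1 IH1]; intros E.
  - rewrite (mu_ext (fun x => E x /\ tmem (Leaf true) x) E) by (simpl; tauto).
    rewrite (mu_empty (fun x => E x /\ ~ tmem (Leaf true) x)) by (simpl; tauto). lra.
  - rewrite (mu_ext (fun x => E x /\ ~ tmem (Leaf false) x) E) by (simpl; intuition discriminate).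
    rewrite (mu_empty (fun x => E x /\ tmem (Leaf false) x)) by (simpl; intuition discriminate). lra.
  - assert (Hfib : forall b P, (forall y, tmem (Node t0 t1) (scons b y) <-> P y) ->
      mu (fiber (fun x => E x /\ tmem (Node t0 t1) x) (b :: nil)) = mu (fun y => fiber E (b :: nil) y /\ P y) /\
      mu (fiber (fun x => E x /\ ~ tmem (Node t0 t1) x) (b :: nil)) = mu (fun y => fiber E (b :: nil) y /\ ~ P y)).
    { intros b P HP. split; apply mu_ext; intros y; unfold fiber; simpl sapp; rewrite HP; tauto. }
    destruct (Hfib false (tmem t0) ltac:(reflexivity)) as [H0 H0'].
    destruct (Hfib true (tmem t1) ltac:(reflexivity)) as [H1 H1'].
    rewrite (mu_split E), (mu_split (fun x => E x /\ _ x)), (mu_split (fun x => E x /\ ~ _ x)).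
    rewrite H0, H0', H1, H1', (IH0 (fiber E (false :: nil))), (IH1 (fiber E (true :: nil))). lra.
Qed.

Lemma density_tmem T t : density (tmem T) t = tval (tsub T t).
Proof. unfold density. rewrite <- mu_tmem. apply mu_ext. intros y. symmetry. apply tmem_tsub. Qed.

Fixpoint tunion (a b : tree) : tree :=
  match a, b with
  | Leaf true, _ => Leaf true
  | Leaf false, _ => b
  | Node _ _, Leaf true => Leaf true
  | Node _ _, Leaf false => a
  | Node a0 a1, Node b0 b1 => Node (tunion a0 b0) (tunion a1 b1)
  end.

Lemma tmem_tunion a b x : tmem (tunion a b) x <-> tmem a x \/ tmem b x.
Proof.
  revert b x. induction a as [[|]|a0 IH0 a1 IH1]; intros b x.
  - simpl. tauto.
  - simpl. intuition discriminate.
  - destruct b as [[|]|b0 b1]; simpl; try (intuition discriminate).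
    destruct (x 0%nat); [apply IH1|apply IH0].
Qed.

Fixpoint tbasic (s : list bool) : tree :=
  match s with
  | nil => Leaf true
  | b :: s => if b then Node (Leaf false) (tbasic s) else Node (tbasic s) (Leaf false)
  end.

Lemma tmem_tbasic s x : tmem (tbasic s) x <-> Ns s x.
Proof.
  revert x. induction s as [|b s IH]; intros x; [simpl; split; auto; intros; apply Ns_nil|].
  rewrite Ns_cons. destruct b; simpl; destruct (x 0%nat); rewrite ?IH; intuition discriminate.
Qed.

Definition tunion_list (l : list (list bool)) : tree :=
  fold_right (fun s T => tunion (tbasic s) T) (Leaf false) l.

Lemma tmem_tunion_list l x : tmem (tunion_list l) x <-> exists s, In s l /\ Ns s x.
Proof.
  induction l as [|s l IH]; simpl.
  - split; [discriminate|]. intros [? [[] _]].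
  - rewrite tmem_tunion, tmem_tbasic, IH. split.
    + intros [H|[s' [H1 H2]]]; eauto.
    + intros [s' [[<-|H1] H2]]; eauto.
Qed.

Definition symdiff (A B : cantor -> Prop) : cantor -> Prop := fun x => (A x /\ ~ B x) \/ (B x /\ ~ A x).

Lemma mu_symdiffC A B : mu (symdiff A B) = mu (symdiff B A).
Proof. apply mu_ext. unfold symdiff. tauto. Qed.

Lemma mu_symdiff_triangle A B C : mu (symdiff A C) <= mu (symdiff A B) + mu (symdiff B C).
Proof.
  eapply Rle_trans; [|apply mu_union_le]. apply mu_mono. unfold symdiff. intros x.
  destruct (classic (B x)); tauto.
Qed.

Lemma mu_symdiff_self A : mu (symdiff A A) = 0.
Proof. apply mu_empty. unfold symdiff. tauto. Qed.

Lemma density_le_symdiff A B t : density A t <= density B t + mu (symdiff A B) / dyad (length t).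
Proof.
  unfold density. pose proof (dyad_pos (length t)).
  eapply Rle_trans.
  { apply (mu_mono _ (fun y => fiber B t y \/ fiber (symdiff A B) t y)).
    intros y Hy. unfold fiber, symdiff in *. destruct (classic (B (sapp t y))); tauto. }
  eapply Rle_trans; [apply mu_union_le|]. apply Rplus_le_compat_l.
  apply (Rmult_le_reg_l (dyad (length t))); [assumption|].
  rewrite <- mu_inter_Ns. field_simplify; [|lra].
  apply mu_mono. tauto.
Qed.

Lemma density_symdiff A B t : Rabs (density A t - density B t) <= mu (symdiff A B) / dyad (length t).
Proof.
  pose proof (density_le_symdiff A B t). pose proof (density_le_symdiff B A t).
  rewrite mu_symdiffC in H0. apply Rabs_le. lra.
Qed.

Lemma mu_cover_tail (s : nat -> list bool) r n :
  is_series (fun k => dyad (length (s k))) r ->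
  mu (fun x => (exists k, Ns (s k) x) /\ ~ tmem (tunion_list (map s (seq 0 (S n)))) x)
    <= r - sum_f_R0 (fun k => dyad (length (s k))) n.
Proof.
  intros Hs. assert (Hex : ex_series (fun k => dyad (length (s k)))) by (exists r; exact Hs).
  apply mu_le_cover. exists (fun k => s (S n + k)%nat). split.
  - intros x [[k Hk] Hout]. destruct (Compare_dec.le_lt_dec k n).
    + exfalso. apply Hout, tmem_tunion_list. exists (s k). split; [|exact Hk].
      apply in_map, in_seq. lia.
    + exists (k - S n)%nat. replace (S n + (k - S n))%nat with k by lia. exact Hk.
  - assert (Htail := Series_incr_n (fun k => dyad (length (s k))) (S n) ltac:(lia) Hex).
    rewrite (is_series_unique _ _ Hs) in Htail. simpl pred in Htail.
    replace (r - sum_f_R0 (fun k => dyad (length (s k))) n)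
      with (Series (fun k => dyad (length (s (S n + k)%nat)))) by lra.
    apply Series_correct, (ex_series_incr_n (fun k => dyad (length (s k))) (S n)), Hex.
Qed.

(* A measurable set is approximated by the clopen union of finitely many sets of a
   nearly optimal cover. *)
Lemma tree_approx A eps : measurable A -> 0 < eps -> exists T, mu (symdiff A (tmem T)) < eps.
Proof.
  intros HA Heps.
  destruct (mu_approx_cover A (eps / 3)) as [r [[s [Hc Hs]] Hr]]; [lra|].
  set (U x := exists k, Ns (s k) x).
  assert (HUA : mu (fun x => U x /\ ~ A x) < eps / 3).
  { assert (mu U <= r) by (apply mu_le_cover; exists s; split; auto).
    pose proof (HA U) as Hsplit.
    rewrite (mu_ext (fun x => U x /\ A x) A) in Hsplit
      by (intros x; split; [tauto|intros Ax; split; [exact (Hc x Ax)|exact Ax]]).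
    lra. }
  pose proof (proj1 (is_series_Reals _ _) Hs (eps / 3) ltac:(lra)) as [n Hn].
  specialize (Hn n (le_n _)). unfold Rdist, R_dist in Hn. apply Rabs_def2 in Hn.
  exists (tunion_list (map s (seq 0 (S n)))).
  pose proof (mu_cover_tail s r n Hs) as Htail.
  eapply Rle_lt_trans.
  { apply (mu_mono _ (fun x => (U x /\ ~ tmem (tunion_list (map s (seq 0 (S n)))) x) \/ (U x /\ ~ A x))).
    intros x [[Ax Hx]|[Hx Ax]]; [left; split; [exact (Hc x Ax)|exact Hx]|right; split; [|exact Ax]].
    apply tmem_tunion_list in Hx. destruct Hx as [s' [Hin Hs']].
    apply in_map_iff in Hin. destruct Hin as [k [<- _]]. exists k. exact Hs'. }
  eapply Rle_lt_trans; [apply mu_union_le|]. unfold U, dyad in *. lra.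
Qed.

(** * Gadgets *)

(* Along its right spine [1^k], the left turn at depth [j] leads, after a
   padding [1^a] of full left siblings, to a node [tdip j] of value [1 - 2^-(j+1)] whose
   right child is full: following [1^j 0 1^a] produces a density dip of depth
   [2^-(j+1)], and one more [1] recovers density 1. *)
Fixpoint tcofinite (m : nat) : tree :=
  match m with 0%nat => Leaf false | S m => Node (tcofinite m) (Leaf true) end.
Definition tdip (m : nat) : tree := Node (tcofinite m) (Leaf true).
Fixpoint tpad (i : nat) (T : tree) : tree :=
  match i with 0%nat => T | S i => Node (Leaf true) (tpad i T) end.
Fixpoint tchain (a n j : nat) : tree :=
  match n with 0%nat => Leaf true | S n => Node (tpad a (tdip j)) (tchain a n (S j)) end.
Definition gadget (k a : nat) : tree := tchain a (S k) 0.

Fixpoint tgadgets (k a i : nat) : tree :=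
  match i with 0%nat => gadget k a | S i => Node (tgadgets k a i) (tgadgets k a i) end.

Fixpoint tgraft (k a : nat) (T : tree) : tree :=
  match T with
  | Leaf true => tgadgets k a k
  | Leaf false => Leaf false
  | Node t0 t1 => Node (tgraft k a t0) (tgraft k a t1)
  end.

Lemma tval_tcofinite m : tval (tcofinite m) = 1 - dyad m.
Proof. induction m as [|m IH]; simpl tval; [rewrite dyad_0|rewrite IH, dyad_S]; lra. Qed.

Lemma tval_tdip m : tval (tdip m) = 1 - dyad (S m).
Proof. simpl tval. rewrite tval_tcofinite, dyad_S. lra. Qed.

Lemma tval_tpad i T : tval (tpad i T) = 1 - dyad i * (1 - tval T).
Proof. induction i as [|i IH]; simpl tval; [rewrite dyad_0|rewrite IH, dyad_S]; lra. Qed.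

Lemma tval_tchain a n j : 1 - dyad (S a) <= tval (tchain a n j).
Proof.
  revert j. induction n as [|n IH]; intros j; simpl tval; [pose proof (dyad_pos (S a)); lra|].
  rewrite tval_tpad, tval_tdip. specialize (IH (S j)).
  assert (dyad a * (1 - (1 - dyad (S j))) <= dyad (S a)).
  { replace (1 - (1 - dyad (S j))) with (dyad (S j)) by ring.
    rewrite <- dyad_add. apply dyad_le. lia. }
  lra.
Qed.

Lemma tval_gadget_ge k a : 1 - dyad (S a) <= tval (gadget k a).
Proof. apply tval_tchain. Qed.

Lemma tval_tgadgets k a i : tval (tgadgets k a i) = tval (gadget k a).
Proof.
  induction i as [|i IH]; [reflexivity|].
  change ((tval (tgadgets k a i) + tval (tgadgets k a i)) / 2 = tval (gadget k a)). rewrite IH. lra.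
Qed.

Lemma tval_tgraft k a T : tval (tgraft k a T) = tval T * tval (gadget k a).
Proof.
  induction T as [[|]|t0 IH0 t1 IH1].
  - simpl tgraft. rewrite tval_tgadgets. simpl. ring.
  - simpl. ring.
  - change ((tval (tgraft k a t0) + tval (tgraft k a t1)) / 2 = (tval t0 + tval t1) / 2 * tval (gadget k a)).
    rewrite IH0, IH1. field.
Qed.

Lemma tmem_tgraft k a T x : tmem (tgraft k a T) x -> tmem T x.
Proof.
  revert x. induction T as [[|]|t0 IH0 t1 IH1]; intros x; simpl; auto.
  destruct (x 0%nat); auto.
Qed.

Lemma tsub_tchain a j n i : (j <= n)%nat -> tsub (tchain a n i) (repeat true j) = tchain a (n - j) (i + j).
Proof.
  revert n i. induction j as [|j IH]; intros n i H; [simpl; rewrite Nat.sub_0_r, Nat.add_0_r; reflexivity|].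
  destruct n; [lia|]. simpl. rewrite IH by lia. f_equal. lia.
Qed.

Lemma tsub_tpad T j i : (j <= i)%nat -> tsub (tpad i T) (repeat true j) = tpad (i - j) T.
Proof.
  revert i. induction j as [|j IH]; intros i H; [simpl; rewrite Nat.sub_0_r; reflexivity|].
  destruct i; [lia|]. apply IH. lia.
Qed.

Lemma tsub_tgadgets k a u i : (length u <= i)%nat -> tsub (tgadgets k a i) u = tgadgets k a (i - length u).
Proof.
  revert i. induction u as [|b u IH]; intros i H; [simpl; rewrite Nat.sub_0_r; reflexivity|].
  destruct i; simpl in H; [lia|]. destruct b; apply IH; lia.
Qed.

Definition dip_address (m a : nat) : list bool := repeat true m ++ false :: repeat true a.
Definition exit_address (m a : nat) : list bool := dip_address m a ++ true :: nil.

Lemma length_dip_address m a : length (dip_address m a) = (m + 1 + a)%nat.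
Proof. unfold dip_address. rewrite length_app, repeat_length. simpl. rewrite repeat_length. lia. Qed.

Lemma length_exit_address m a : length (exit_address m a) = (m + 1 + a + 1)%nat.
Proof. unfold exit_address. rewrite length_app, length_dip_address. reflexivity. Qed.

Lemma tsub_gadget_dip k a m : (m <= k)%nat -> tsub (gadget k a) (dip_address m a) = tdip m.
Proof.
  intros H. unfold dip_address, gadget. rewrite tsub_app, tsub_tchain by lia.
  replace (S k - m)%nat with (S (k - m)) by lia. simpl.
  rewrite tsub_tpad, Nat.sub_diag by lia. reflexivity.
Qed.

Lemma tsub_gadget_exit k a m : (m <= k)%nat -> tsub (gadget k a) (exit_address m a) = Leaf true.
Proof. intros H. unfold exit_address. rewrite tsub_app, tsub_gadget_dip by exact H. reflexivity. Qed.

Definition stays_above (T : tree) (p : list bool) (beta : R) : Prop :=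
  forall l, (l <= length p)%nat -> beta <= tval (tsub T (firstn l p)).

Lemma stays_above_nil T beta : beta <= tval T -> stays_above T nil beta.
Proof. intros H l Hl. simpl in Hl. replace l with 0%nat by lia. exact H. Qed.

Lemma stays_above_app T p q beta :
  stays_above T p beta -> stays_above (tsub T p) q beta -> stays_above T (p ++ q) beta.
Proof.
  intros Hp Hq l Hl. rewrite length_app in Hl. rewrite firstn_app.
  destruct (Compare_dec.le_lt_dec l (length p)).
  - replace (l - length p)%nat with 0%nat by lia. rewrite app_nil_r. apply Hp, l0.
  - rewrite firstn_all2 by lia. rewrite tsub_app. apply Hq. lia.
Qed.

Lemma stays_above_weaken T p beta beta' : beta' <= beta -> stays_above T p beta -> stays_above T p beta'.
Proof. intros H Hp l Hl. specialize (Hp l Hl). lra. Qed.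

Lemma stays_above_single T b beta :
  beta <= tval T -> beta <= tval (tsub T (b :: nil)) -> stays_above T (b :: nil) beta.
Proof. intros H0 H1 [|l] Hl; [exact H0|]. simpl in Hl. replace l with 0%nat by lia. exact H1. Qed.

Lemma stays_above_cons T b p beta :
  beta <= tval T -> stays_above (tsub T (b :: nil)) p beta -> stays_above T (b :: p) beta.
Proof.
  intros H Hp. change (b :: p) with ((b :: nil) ++ p). apply stays_above_app; [|exact Hp].
  apply stays_above_single; [exact H|]. exact (Hp 0%nat ltac:(lia)).
Qed.

Lemma stays_above_tchain a beta j n i :
  beta <= 1 - dyad (S a) -> stays_above (tchain a n i) (repeat true j) beta.
Proof.
  intros Hbeta. revert n i. induction j as [|j IH]; intros n i.
  - apply stays_above_nil. pose proof (tval_tchain a n i). lra.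
  - apply stays_above_cons; [pose proof (tval_tchain a n i); lra|].
    destruct n; [|apply IH].
    intros l _. simpl tchain. rewrite !tsub_Leaf. simpl. pose proof (dyad_pos (S a)). lra.
Qed.

Lemma stays_above_tpad i T beta j :
  beta <= tval T -> (j <= i)%nat -> stays_above (tpad i T) (repeat true j) beta.
Proof.
  intros Hbeta. pose proof (tval_le1 T).
  assert (Hpad : forall i, beta <= tval (tpad i T)).
  { intros i'. rewrite tval_tpad. pose proof (dyad_pos i'). pose proof (dyad_le1 i'). nra. }
  revert i. induction j as [|j IH]; intros i Hj; [apply stays_above_nil, Hpad|].
  destruct i; [lia|]. apply stays_above_cons; [apply Hpad|]. apply IH. lia.
Qed.

Lemma stays_above_exit k a m :
  (m <= k)%nat -> (m <= a)%nat -> stays_above (gadget k a) (exit_address m a) (1 - dyad (S m)).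
Proof.
  intros Hk Ha. pose proof (dyad_le (S m) (S a) ltac:(lia)) as Hma.
  assert (Hdip : 1 - dyad (S m) <= tval (tdip m)) by (rewrite tval_tdip; lra).
  unfold exit_address, dip_address. rewrite <- app_assoc. apply stays_above_app.
  - apply stays_above_tchain. lra.
  - unfold gadget. rewrite tsub_tchain by lia. replace (S k - m)%nat with (S (k - m)) by lia.
    apply stays_above_cons; [pose proof (tval_tchain a (S (k - m)) (0 + m)); lra|].
    apply stays_above_app; [apply stays_above_tpad; [exact Hdip|lia]|].
    simpl. rewrite tsub_tpad, Nat.sub_diag by lia.
    apply stays_above_single; [exact Hdip|]. simpl. pose proof (dyad_pos (S m)). lra.
Qed.

Lemma stays_above_tgadgets k a i p :
  (length p <= i)%nat -> stays_above (tgadgets k a i) p (tval (gadget k a)).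
Proof.
  intros H l Hl. rewrite tsub_tgadgets, tval_tgadgets; [lra|].
  rewrite length_firstn. lia.
Qed.

Definition reaches_gadget (k a : nat) (T : tree) (u p : list bool) : Prop :=
  tsub (tgraft k a T) (u ++ p) = gadget k a /\
  (k <= length (u ++ p) <= tdepth T + k)%nat /\
  stays_above (tsub (tgraft k a T) u) p (tval (tsub (tgraft k a T) u)).

Lemma reaches_gadget_Node k a t0 t1 (b : bool) u p :
  reaches_gadget k a (if b then t1 else t0) u p -> reaches_gadget k a (Node t0 t1) (b :: u) p.
Proof.
  intros [H1 [H2 H3]]. split; [|split]; [destruct b; exact H1| |destruct b; exact H3].
  simpl length in *. simpl tdepth.
  pose proof (Nat.le_max_l (tdepth t0) (tdepth t1)). pose proof (Nat.le_max_r (tdepth t0) (tdepth t1)).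
  destruct b; lia.
Qed.

Lemma tval_Node_le_child t0 t1 : exists b : bool, tval (Node t0 t1) <= tval (if b then t1 else t0).
Proof.
  simpl tval. destruct (Rle_dec (tval t0) (tval t1)); [exists true|exists false]; lra.
Qed.

(* Going to a child of larger value never decreases the value, so a positive node of
   the grafted tree reaches some gadget without losing value on the way. *)
Lemma greedy_descent k a T u :
  (length u <= k)%nat -> 0 < tval (tsub (tgraft k a T) u) -> exists p, reaches_gadget k a T u p.
Proof.
  revert u. induction T as [[|]|t0 IH0 t1 IH1]; intros u Hu Hpos.
  - exists (repeat false (k - length u)). split; [|split]; simpl tgraft.
    + rewrite tsub_app, !tsub_tgadgets; rewrite ?repeat_length; [|lia..].
      replace (k - length u - (k - length u))%nat with 0%nat by lia. reflexivity.
    + rewrite length_app, repeat_length. simpl. lia.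
    + rewrite tsub_tgadgets, tval_tgadgets by lia. apply stays_above_tgadgets. rewrite repeat_length. lia.
  - simpl tgraft in Hpos. rewrite tsub_Leaf in Hpos. simpl in Hpos. lra.
  - destruct u as [|b u].
    + destruct (tval_Node_le_child (tgraft k a t0) (tgraft k a t1)) as [b Hb].
      assert (Hreach : exists p, reaches_gadget k a (if b then t1 else t0) nil p).
      { simpl in Hpos. destruct b; simpl in Hb; [apply IH1|apply IH0]; simpl; lia || lra. }
      destruct Hreach as [p Hp]. exists (b :: p).
      destruct (reaches_gadget_Node k a t0 t1 b nil p Hp) as [H1 [H2 _]].
      split; [exact H1|split; [exact H2|]].
      destruct Hp as [_ [_ H3]]. apply stays_above_cons; [simpl; lra|].
      destruct b; simpl in *; (eapply stays_above_weaken; [|exact H3]); simpl; lra.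
    + simpl in Hu, Hpos.
      destruct b; [destruct (IH1 u ltac:(lia) Hpos) as [p Hp]|destruct (IH0 u ltac:(lia) Hpos) as [p Hp]];
        exists p; [apply (reaches_gadget_Node k a t0 t1 true)|apply (reaches_gadget_Node k a t0 t1 false)];
        exact Hp.
Qed.

(** * Writing events into a point *)

Definition approx_radius (T : tree) (k a : nat) : R := dyad (tdepth T + 3 * k + a + 2).

Definition events_diverge (ev : nat -> option nat) : Prop :=
  forall M, exists N, forall n, (N <= n)%nat -> forall m, ev n = Some m -> (M < m)%nat.

Lemma between_consecutive_values (L : nat -> nat) :
  (forall n, (n <= L n)%nat) ->
  forall N l, (L N <= l)%nat -> exists n, (N <= n)%nat /\ (L n <= l <= L (S n))%nat.
Proof.
  intros HL.
  assert (H : forall j N l, (L N <= l)%nat -> (l < N + j)%nat ->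
                exists n, (N <= n)%nat /\ (L n <= l <= L (S n))%nat).
  { induction j as [|j IH]; intros N l H1 H2; [pose proof (HL N); lia|].
    destruct (Compare_dec.le_lt_dec l (L (S N))); [exists N; lia|].
    destruct (IH (S N) l) as [n Hn]; [lia|lia|]. exists n. lia. }
  intros N l Hl. apply (H (S l) N l Hl). lia.
Qed.

Lemma map_nth_seq (l : list bool) n :
  (n <= length l)%nat -> map (fun i => nth i l false) (seq 0 n) = firstn n l.
Proof.
  revert n. induction l as [|x l IH]; intros n Hn.
  - simpl in Hn. replace n with 0%nat by lia. reflexivity.
  - destruct n; [reflexivity|]. simpl. f_equal.
    rewrite <- seq_shift, map_map. apply IH. simpl in Hn. lia.
Qed.

(* At stage [n] the current string [u] descends into a gadget of a level [k] much
   larger than [|u|], so that along the whole step the density of [A] differs from the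
   value of [gk k] by at most [2^-k]. *)
Section Construction.

Variable A : cantor -> Prop.
Variable Tf : nat -> tree.
Variable af : nat -> nat.
Hypothesis Tf_pos : forall k, 0 < tval (Tf k).
Hypothesis af_ge : forall k, (k <= af k)%nat.

Definition gk (k : nat) : tree := tgraft k (af k) (Tf k).

Hypothesis A_close : forall k, mu (symdiff A (tmem (gk k))) < approx_radius (Tf k) k (af k).

Lemma density_close k t :
  (length t <= tdepth (Tf k) + 2 * k + af k + 2)%nat ->
  Rabs (density A t - tval (tsub (gk k) t)) <= dyad k.
Proof.
  intros Hl. rewrite <- density_tmem. eapply Rle_trans; [apply density_symdiff|].
  pose proof (dyad_pos (length t)).
  apply Rcomplements.Rle_div_l; [assumption|]. rewrite Rmult_comm.
  eapply Rle_trans; [apply Rlt_le, A_close|]. unfold approx_radius.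
  replace (tdepth (Tf k) + 3 * k + af k + 2)%nat
    with (length t + (tdepth (Tf k) + 3 * k + af k + 2 - length t))%nat by lia.
  rewrite dyad_add. apply Rmult_le_compat_l; [lra|apply dyad_le; lia].
Qed.

Lemma tval_gk_pos k : 0 < tval (gk k).
Proof.
  unfold gk. rewrite tval_tgraft. apply Rmult_lt_0_compat; [apply Tf_pos|].
  pose proof (tval_gadget_ge k (af k)). pose proof (dyad_le1 (af k)). rewrite dyad_S in H. lra.
Qed.

Definition stage_level (n : nat) (u : list bool) (e : option nat) : nat :=
  (length u + n + 3 + match e with Some m => m | None => 0 end)%nat.

Definition route (k : nat) (u : list bool) : list bool :=
  epsilon (inhabits nil) (reaches_gadget k (af k) (Tf k) u).

Lemma route_spec k u :
  (length u <= k)%nat -> 0 < tval (tsub (gk k) u) -> reaches_gadget k (af k) (Tf k) u (route k u).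
Proof. intros Hu Hpos. unfold route. apply epsilon_spec, greedy_descent; assumption. Qed.

Definition step_tail (n : nat) (u : list bool) (e : option nat) : list bool :=
  let k := stage_level n u e in
  route k u ++ match e with Some m => exit_address m (af k) | None => nil end.

Definition step_floor (n : nat) (u : list bool) (e : option nat) : R :=
  let v := tval (tsub (gk (stage_level n u e)) u) in
  match e with Some m => Rmin v (1 - dyad (S m)) | None => v end.

Section Step.

Variables (n : nat) (u : list bool) (e : option nat).
Let k := stage_level n u e.
Hypothesis u_pos : 0 < tval (tsub (gk k) u).

Lemma route_reaches : reaches_gadget k (af k) (Tf k) u (route k u).
Proof. apply route_spec; [unfold k, stage_level; lia|exact u_pos]. Qed.

Lemma step_tail_length :
  (length u < length (u ++ step_tail n u e) <= tdepth (Tf k) + 2 * k + af k + 2)%nat.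
Proof.
  destruct route_reaches as [_ [Hlen _]]. unfold step_tail. fold k.
  rewrite app_assoc, length_app.
  destruct e as [m|]; [rewrite length_exit_address|simpl length];
    unfold k, stage_level in *; lia.
Qed.

Lemma step_tail_stays_above : stays_above (tsub (gk k) u) (step_tail n u e) (step_floor n u e).
Proof.
  destruct route_reaches as [Hgad [_ Habove]]. unfold step_tail, step_floor. fold k.
  destruct e as [m|]; [|rewrite app_nil_r; exact Habove].
  apply stays_above_app; [eapply stays_above_weaken; [apply Rmin_l|exact Habove]|].
  rewrite <- tsub_app. unfold gk. rewrite Hgad.
  eapply stays_above_weaken; [apply Rmin_r|]. apply stays_above_exit; unfold k, stage_level.
  - lia.
  - pose proof (af_ge (length u + n + 3 + m)). lia.
Qed.

Lemma density_step_end : 1 - 2 * dyad k <= density A (u ++ step_tail n u e).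
Proof.
  destruct route_reaches as [Hgad _]. pose proof step_tail_length as Hlen.
  pose proof (density_close k (u ++ step_tail n u e) ltac:(lia)) as Hclose.
  apply Rabs_le_between' in Hclose. pose proof (dyad_pos k).
  unfold step_tail in Hclose |- *. fold k in Hclose |- *. rewrite app_assoc in Hclose |- *.
  rewrite tsub_app in Hclose.
  unfold gk in Hclose. rewrite Hgad in Hclose.
  destruct e as [m|].
  - rewrite tsub_gadget_exit in Hclose by (unfold k, stage_level; lia). simpl in Hclose. lra.
  - pose proof (tval_gadget_ge k (af k)). pose proof (dyad_le k (S (af k)) ltac:(pose proof (af_ge k); lia)).
    rewrite app_nil_r in Hclose |- *. change (tsub (gadget k (af k)) nil) with (gadget k (af k)) in Hclose. lra.
Qed.

Lemma density_step_dip m : e = Some m ->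
  density A (u ++ route k u ++ dip_address m (af k)) <= 1 - dyad (S m) + dyad k.
Proof.
  intros Hm. destruct route_reaches as [Hgad _]. pose proof step_tail_length as Hlen.
  assert (Hmk : (m <= k)%nat) by (unfold k, stage_level; rewrite Hm; lia).
  unfold step_tail in Hlen. fold k in Hlen. rewrite Hm, !length_app, length_exit_address in Hlen.
  pose proof (density_close k (u ++ route k u ++ dip_address m (af k))) as Hclose.
  rewrite !length_app, length_dip_address in Hclose. specialize (Hclose ltac:(lia)).
  apply Rabs_le_between' in Hclose.
  rewrite app_assoc in Hclose |- *. rewrite tsub_app in Hclose. unfold gk in Hclose.
  rewrite Hgad, tsub_gadget_dip, tval_tdip in Hclose by exact Hmk. lra.
Qed.

End Step.

Fixpoint stage (ev : nat -> option nat) (n : nat) : list bool :=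
  match n with
  | 0%nat => nil
  | S n => stage ev n ++ step_tail n (stage ev n) (ev n)
  end.

Definition level (ev : nat -> option nat) (n : nat) : nat := stage_level n (stage ev n) (ev n).

Lemma level_value_pos ev n :
  ((0 < n)%nat -> 1 - 2 * dyad (n + 2) <= density A (stage ev n)) ->
  0 < tval (tsub (gk (level ev n)) (stage ev n)).
Proof.
  intros Hdens. destruct n as [|n]; [apply tval_gk_pos|].
  specialize (Hdens ltac:(lia)). set (k := level ev (S n)).
  assert (Hlen : (length (stage ev (S n)) <= k)%nat) by (unfold k, level, stage_level; lia).
  pose proof (density_close k (stage ev (S n)) ltac:(lia)) as Hclose.
  apply Rabs_le_between' in Hclose.
  pose proof (dyad_le 3 (S n + 2) ltac:(lia)). pose proof (dyad_le 3 k ltac:(unfold k, level, stage_level; lia)).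
  assert (dyad 3 = / 8) by (unfold dyad; simpl; field). lra.
Qed.

Lemma stage_invariant ev n :
  (n <= length (stage ev n))%nat /\
  ((0 < n)%nat -> 1 - 2 * dyad (n + 2) <= density A (stage ev n)) /\
  0 < tval (tsub (gk (level ev n)) (stage ev n)).
Proof.
  induction n as [|n [Hlen [_ Hpos]]]; [split; [|split]; [lia|lia|apply level_value_pos; lia]|].
  assert (Hdens : (0 < S n)%nat -> 1 - 2 * dyad (S n + 2) <= density A (stage ev (S n))).
  { intros _. eapply Rle_trans; [|exact (density_step_end _ _ _ Hpos)].
    pose proof (dyad_le (S n + 2) (level ev n) ltac:(unfold level, stage_level; lia)). unfold level in *. lra. }
  split; [|split; [exact Hdens|apply level_value_pos, Hdens]].
  pose proof (step_tail_length _ _ _ Hpos). simpl. lia.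
Qed.

Lemma stage_value_pos ev n : 0 < tval (tsub (gk (level ev n)) (stage ev n)).
Proof. apply stage_invariant. Qed.

Lemma stage_length_ge ev n : (n <= length (stage ev n))%nat.
Proof. apply stage_invariant. Qed.

Lemma stage_extends ev n m : (n <= m)%nat -> exists v, stage ev m = stage ev n ++ v.
Proof.
  induction 1 as [|m _ [v Hv]]; [exists nil; rewrite app_nil_r; reflexivity|].
  exists (v ++ step_tail m (stage ev m) (ev m)). simpl. rewrite Hv, app_assoc. reflexivity.
Qed.

Lemma density_between_stages ev n l :
  (length (stage ev n) <= l <= length (stage ev (S n)))%nat ->
  step_floor n (stage ev n) (ev n) - dyad (level ev n) <= density A (firstn l (stage ev (S n))).
Proof.
  intros Hl. pose proof (stage_value_pos ev n) as Hpos.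
  pose proof (step_tail_length _ _ _ Hpos) as Hlen.
  pose proof (step_tail_stays_above _ _ _ Hpos (l - length (stage ev n))%nat) as Habove.
  simpl stage in Hl |- *. unfold level in *.
  set (u := stage ev n) in *. set (w := step_tail n u (ev n)) in *.
  rewrite length_app in Hl.
  rewrite firstn_app, firstn_all2, <- tsub_app in * by lia. specialize (Habove ltac:(lia)).
  pose proof (density_close (stage_level n u (ev n)) (u ++ firstn (l - length u) w)) as Hclose.
  rewrite length_app, length_firstn in Hclose. rewrite length_app in Hlen.
  specialize (Hclose ltac:(lia)). apply Rabs_le_between' in Hclose. lra.
Qed.

Lemma density_dip_between ev n m : ev n = Some m ->
  exists t, (length (stage ev n) <= length t)%nat /\ (exists v, stage ev (S n) = t ++ v) /\
    density A t <= 1 - dyad (S m) + dyad (level ev n).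
Proof.
  intros Hm. pose proof (stage_value_pos ev n) as Hpos.
  set (u := stage ev n) in *. set (k := level ev n) in *.
  exists (u ++ route k u ++ dip_address m (af k)). split; [rewrite length_app; lia|split].
  - exists (true :: nil). simpl stage. unfold step_tail, k, level, u. rewrite Hm.
    unfold exit_address. rewrite !app_assoc. reflexivity.
  - exact (density_step_dip _ _ _ Hpos m Hm).
Qed.

Definition limit_point (ev : nat -> option nat) : cantor := fun i => nth i (stage ev (S i)) false.

Lemma prefix_limit_point ev n l :
  (l <= length (stage ev n))%nat -> prefix (limit_point ev) l = firstn l (stage ev n).
Proof.
  intros Hl. rewrite <- map_nth_seq by exact Hl. unfold prefix. apply map_ext_in.
  intros i Hi. apply in_seq in Hi. unfold limit_point.
  destruct (stage_extends ev n (max n (S i)) ltac:(lia)) as [v1 E1].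
  destruct (stage_extends ev (S i) (max n (S i)) ltac:(lia)) as [v2 E2].
  pose proof (stage_length_ge ev (S i)).
  transitivity (nth i (stage ev (max n (S i))) false);
    [rewrite E2; symmetry|rewrite E1]; apply app_nth1; lia.
Qed.

Lemma step_floor_ge ev n M :
  (M < n)%nat -> (forall m, ev n = Some m -> (M < m)%nat) ->
  1 - 3 * dyad M <= step_floor n (stage ev n) (ev n).
Proof.
  intros HMn Hev. destruct (stage_invariant ev n) as [_ [Hdens _]]. specialize (Hdens ltac:(lia)).
  pose proof (density_close (level ev n) (stage ev n) ltac:(unfold level, stage_level; lia)) as Hclose.
  apply Rabs_le_between' in Hclose.
  pose proof (dyad_le M (n + 2) ltac:(lia)).
  pose proof (dyad_le M (level ev n) ltac:(unfold level, stage_level; lia)).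
  unfold step_floor, level in *. destruct (ev n) as [m|]; [|lra].
  pose proof (dyad_le M (S m) ltac:(specialize (Hev m eq_refl); lia)).
  apply Rmin_glb; lra.
Qed.

Lemma Phi_limit_point_of_diverge ev : events_diverge ev -> Phi A (limit_point ev).
Proof.
  intros Hdiv. apply is_lim_seq_spec. intros [eps Heps]. simpl.
  destruct (dyad_small (eps / 4)) as [M HM]; [lra|].
  destruct (Hdiv M) as [N HN].
  exists (length (stage ev (N + M + 1))). intros l Hl.
  destruct (between_consecutive_values _ (stage_length_ge ev) _ l Hl) as [n [Hn Hnl]].
  rewrite density_prefix, (prefix_limit_point ev (S n) l (proj2 Hnl)).
  pose proof (density_between_stages ev n l Hnl).
  pose proof (step_floor_ge ev n M ltac:(lia) (HN n ltac:(lia))).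
  pose proof (dyad_le M (level ev n) ltac:(unfold level, stage_level; lia)).
  pose proof (density_le1 A (firstn l (stage ev (S n)))).
  apply Rabs_def1; lra.
Qed.

(* Events [<= M] at infinitely many stages produce density dips of depth [2^-(M+1)]
   along the limit point. *)
Lemma diverge_of_Phi_limit_point ev : Phi A (limit_point ev) -> events_diverge ev.
Proof.
  intros HP. apply NNPP. intros Hnot. apply not_all_ex_not in Hnot as [M HM]. apply HM.
  apply is_lim_seq_spec in HP. destruct (HP (mkposreal (dyad (M + 2)) (dyad_pos _))) as [N HN].
  simpl in HN. exists (N + M)%nat. intros n Hn m Hm. apply NNPP. intros Hmm.
  destruct (density_dip_between ev n m Hm) as [t [Ht [[v Hv] Hdip]]].
  assert (Htn : (length t <= length (stage ev (S n)))%nat) by (rewrite Hv, length_app; lia).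
  specialize (HN (length t) ltac:(pose proof (stage_length_ge ev n); lia)).
  rewrite density_prefix, (prefix_limit_point ev (S n) _ Htn), Hv, firstn_app, Nat.sub_diag,
    firstn_all, app_nil_r in HN.
  apply Rabs_def2 in HN.
  pose proof (dyad_le (S m) (S M) ltac:(lia)).
  pose proof (dyad_le (M + 3) (level ev n) ltac:(unfold level, stage_level; lia)).
  replace (M + 3)%nat with (S (S (S M))) in * by lia. replace (M + 2)%nat with (S (S M)) in * by lia.
  rewrite !dyad_S in *. pose proof (dyad_pos M). lra.
Qed.

End Construction.

Lemma stage_ext Tf af ev ev' n :
  (forall j, (j < n)%nat -> ev j = ev' j) -> stage Tf af ev n = stage Tf af ev' n.
Proof.
  induction n as [|n IH]; intros H; [reflexivity|]. simpl.
  rewrite IH by (intros; apply H; lia). rewrite H by lia. reflexivity.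
Qed.

Lemma limit_point_ext Tf af ev ev' i :
  (forall j, (j <= i)%nat -> ev j = ev' j) -> limit_point Tf af ev i = limit_point Tf af ev' i.
Proof. intros H. unfold limit_point. rewrite (stage_ext Tf af ev ev') by (intros; apply H; lia). reflexivity. Qed.

(** * Reducing F_sigma delta sets to divergence of events *)

Lemma prefix_firstn x m n : (m <= n)%nat -> prefix x m = firstn m (prefix x n).
Proof.
  intros H. unfold prefix. replace n with (m + (n - m))%nat by lia.
  rewrite seq_app, map_app, firstn_app, length_map, length_seq, Nat.sub_diag. simpl.
  rewrite app_nil_r, firstn_all2; [reflexivity|]. rewrite length_map, length_seq. lia.
Qed.

Lemma prefix_eq_le x y m n : (m <= n)%nat -> prefix x n = prefix y n -> prefix x m = prefix y m.
Proof. intros H E. rewrite (prefix_firstn x m n H), (prefix_firstn y m n H), E. reflexivity. Qed.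

Lemma Ns_prefix x y n : Ns (prefix x n) y <-> prefix y n = prefix x n.
Proof. unfold Defs.N. rewrite prefix_length. reflexivity. Qed.

(* [least_below P n] is the least [i < n] satisfying [P], or [n] if there is none. *)
Fixpoint least_below (P : nat -> Prop) (n : nat) : nat :=
  match n with
  | 0%nat => 0%nat
  | S n => let r := least_below P n in
           if Nat.ltb r n then r else if excluded_middle_informative (P n) then n else S n
  end.

Lemma least_below_spec P n :
  (least_below P n <= n)%nat /\ (forall i, (i < least_below P n)%nat -> ~ P i) /\
  ((least_below P n < n)%nat -> P (least_below P n)).
Proof.
  induction n as [|n [H1 [H2 H3]]]; [simpl; repeat split; intros; lia|].
  simpl. destruct (Nat.ltb_spec (least_below P n) n); [split; [lia|split; auto]|].
  replace (least_below P n) with n in * by lia.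
  destruct (excluded_middle_informative (P n)); [split; [lia|split; auto]|].
  split; [lia|split; [|lia]]. intros i Hi. destruct (Nat.eq_dec i n); [subst; auto|apply H2; lia].
Qed.

Lemma least_below_le P n i : (i < n)%nat -> P i -> (least_below P n <= i)%nat.
Proof.
  intros Hi HP. destruct (least_below_spec P n) as [_ [H2 _]].
  destruct (Compare_dec.le_lt_dec (least_below P n) i); [assumption|]. exfalso. exact (H2 i l HP).
Qed.

Lemma least_below_ge P n g : (g <= n)%nat -> (forall i, (i < g)%nat -> ~ P i) -> (g <= least_below P n)%nat.
Proof.
  intros Hg HP. destruct (least_below_spec P n) as [_ [_ H3]].
  destruct (Compare_dec.le_lt_dec g (least_below P n)); [assumption|].
  exfalso. apply (HP (least_below P n) l), H3. lia.
Qed.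

Lemma bounded_mono_eventually_const (g : nat -> nat) K :
  (forall n, (g n <= g (S n))%nat) -> (forall n, (g n <= K)%nat) ->
  exists N, forall n, (N <= n)%nat -> g n = g N.
Proof.
  intros Hmono HK.
  assert (Hle : forall n n', (n <= n')%nat -> (g n <= g n')%nat)
    by (induction 1; [lia|pose proof (Hmono m); lia]).
  enough (H : forall d n0, (K - g n0 <= d)%nat -> exists N, forall n, (N <= n)%nat -> g n = g N)
    by exact (H K 0%nat ltac:(lia)).
  induction d as [|d IH]; intros n0 Hd.
  - exists n0. intros n Hn. pose proof (Hle _ _ Hn). pose proof (HK n). lia.
  - destruct (classic (forall n, (n0 <= n)%nat -> g n = g n0)) as [H|H]; [exists n0; exact H|].
    apply not_all_ex_not in H as [n1 H]. apply imply_to_and in H as [H1 H2].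
    pose proof (Hle _ _ H1). pose proof (HK n1). apply (IH n1). lia.
Qed.

(* Reduction of an [F_sigma delta] set [forall m, exists k, F m k x] to divergence of
   events: [least_meeting m x n] is the least [k < n] such that [F m k] meets
   [N_(x|n)]; it is nondecreasing in [n], and by closedness it stabilizes iff [x]
   belongs to some [F m k].  At step [n] the event is the least [m <= n] whose
   [least_meeting] moves. *)
Section Reduction.

Variable F : nat -> nat -> cantor -> Prop.
Hypothesis F_closed : forall m k, Defs.closed_set (F m k).

Definition meets (m k : nat) (t : list bool) : Prop := exists y, Ns t y /\ F m k y.

Definition least_meeting (m : nat) (x : cantor) (n : nat) : nat :=
  least_below (fun k => meets m k (prefix x n)) n.

Definition moves (m : nat) (x : cantor) (n : nat) : bool :=
  negb (Nat.eqb (least_meeting m x (S n)) (least_meeting m x n)).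

Definition fsd_events (x : cantor) (n : nat) : option nat :=
  let j := least_below (fun m => moves m x n = true) (S n) in
  if Nat.ltb j (S n) then Some j else None.

Lemma meets_prefix_le m k x n n' : (n <= n')%nat -> meets m k (prefix x n') -> meets m k (prefix x n).
Proof.
  intros Hn [y [Hy Hf]]. exists y. split; [|exact Hf].
  apply Ns_prefix. apply Ns_prefix in Hy. exact (prefix_eq_le y x n n' Hn Hy).
Qed.

Lemma least_meeting_S m x n : (least_meeting m x n <= least_meeting m x (S n))%nat.
Proof.
  unfold least_meeting. apply least_below_ge;
    [pose proof (least_below_spec (fun k => meets m k (prefix x n)) n); lia|].
  intros i Hi Hmeet. destruct (least_below_spec (fun k => meets m k (prefix x n)) n) as [_ [H2 _]].
  exact (H2 i Hi (meets_prefix_le m i x n (S n) (Nat.le_succ_diag_r n) Hmeet)).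
Qed.

Lemma least_meeting_stable_iff m x :
  (exists N, forall n, (N <= n)%nat -> least_meeting m x n = least_meeting m x N) <-> exists k, F m k x.
Proof.
  split.
  - intros [N HN]. set (c := least_meeting m x N). exists c.
    assert (Hmeet : forall n, meets m c (prefix x n)).
    { intros n. apply (meets_prefix_le m c x n (N + S c + n)); [lia|].
      pose proof (HN (N + S c + n)%nat ltac:(lia)) as E. fold c in E.
      destruct (least_below_spec (fun k => meets m k (prefix x (N + S c + n))) (N + S c + n)) as [_ [_ H3]].
      unfold least_meeting in E. rewrite E in H3. apply H3. lia. }
    apply NNPP. intros Hnot. destruct (F_closed m c x Hnot) as [n Hopen].
    destruct (Hmeet n) as [y [Hy Hf]]. exact (Hopen y Hy Hf).
  - intros [k Hk]. apply (bounded_mono_eventually_const _ k (least_meeting_S m x)).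
    intros n. unfold least_meeting. destruct (Compare_dec.le_lt_dec n k).
    + pose proof (least_below_spec (fun k => meets m k (prefix x n)) n). lia.
    + apply least_below_le; [exact l|]. exists x. split; [apply Ns_prefix; reflexivity|exact Hk].
Qed.

Lemma stable_of_events_diverge x m :
  events_diverge (fsd_events x) ->
  exists N, forall n, (N <= n)%nat -> least_meeting m x n = least_meeting m x N.
Proof.
  intros Hdiv. destruct (Hdiv m) as [N HN]. exists (N + m)%nat.
  assert (Hstep : forall n, (N + m <= n)%nat -> least_meeting m x (S n) = least_meeting m x n).
  { intros n Hn. apply Nat.eqb_eq, Bool.negb_false_iff. apply Bool.not_true_is_false. intros Hmoves.
    pose proof (least_below_le (fun j => moves j x n = true) (S n) m ltac:(lia) Hmoves) as Hle.
    specialize (HN n ltac:(lia) (least_below (fun j => moves j x n = true) (S n))).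
    unfold fsd_events in HN. destruct (Nat.ltb_spec (least_below (fun j => moves j x n = true) (S n)) (S n)).
    - specialize (HN eq_refl). lia.
    - lia. }
  intros n Hn. induction Hn as [|n Hn IH]; [reflexivity|]. rewrite Hstep; assumption.
Qed.

Lemma events_diverge_of_stable x :
  (forall m, exists N, forall n, (N <= n)%nat -> least_meeting m x n = least_meeting m x N) ->
  events_diverge (fsd_events x).
Proof.
  intros Hstable.
  assert (Hquiet : forall M, exists N, forall m n, (m <= M)%nat -> (N <= n)%nat -> moves m x n = false).
  { intros M. induction M as [|M [N1 HN1]].
    - destruct (Hstable 0%nat) as [N HN]. exists N. intros m n Hm Hn.
      replace m with 0%nat by lia. unfold moves. rewrite (HN (S n)), (HN n), Nat.eqb_refl by lia. reflexivity.
    - destruct (Hstable (S M)) as [N2 HN2]. exists (N1 + N2)%nat. intros m n Hm Hn.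
      destruct (Nat.eq_dec m (S M)) as [->|]; [|apply HN1; lia].
      unfold moves. rewrite (HN2 (S n)), (HN2 n), Nat.eqb_refl by lia. reflexivity. }
  intros M. destruct (Hquiet M) as [N HN]. exists N. intros n Hn m Hm.
  unfold fsd_events in Hm.
  destruct (least_below_spec (fun j => moves j x n = true) (S n)) as [_ [_ H3]].
  destruct (Nat.ltb_spec (least_below (fun j => moves j x n = true) (S n)) (S n)); [|discriminate].
  injection Hm as <-. specialize (H3 H).
  destruct (Compare_dec.le_lt_dec (least_below (fun j => moves j x n = true) (S n)) M); [|assumption].
  rewrite HN in H3 by lia. discriminate.
Qed.

Lemma events_diverge_iff x : events_diverge (fsd_events x) <-> forall m, exists k, F m k x.
Proof.
  split.
  - intros Hdiv m. apply least_meeting_stable_iff, stable_of_events_diverge, Hdiv.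
  - intros HF. apply events_diverge_of_stable. intros m. apply least_meeting_stable_iff, HF.
Qed.

Lemma fsd_events_prefix x y n : prefix x (S n) = prefix y (S n) -> fsd_events x n = fsd_events y n.
Proof.
  intros E. pose proof (prefix_eq_le x y n (S n) (Nat.le_succ_diag_r n) E) as E'.
  unfold fsd_events, moves, least_meeting. rewrite E, E'. reflexivity.
Qed.

End Reduction.

(** * Genericity *)

Lemma Phi_Fsigmadelta A : Fsigmadelta (Phi A).
Proof.
  exists (fun m k x => forall n, (k <= n)%nat -> 1 - dyad m <= density A (prefix x n)). split.
  - intros m k x Hx. apply not_all_ex_not in Hx as [n Hn]. apply imply_to_and in Hn as [Hkn Hd].
    exists n. intros y Hy Hall. apply Hd. apply Ns_prefix in Hy. rewrite <- Hy. exact (Hall n Hkn).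
  - intros x. unfold Phi. split.
    + intros HP m. apply is_lim_seq_spec in HP. destruct (HP (mkposreal (dyad m) (dyad_pos m))) as [N HN].
      exists N. intros n Hn. specialize (HN n Hn). simpl in HN. rewrite density_prefix in HN.
      apply Rabs_def2 in HN. lra.
    + intros HF. apply is_lim_seq_spec. intros eps. destruct (dyad_small eps (cond_pos eps)) as [m Hm].
      destruct (HF m) as [k Hk]. exists k. intros n Hn. rewrite density_prefix.
      pose proof (Hk n Hn). pose proof (density_le1 A (prefix x n)). apply Rabs_def1; lra.
Qed.

Lemma Phi_complete_of_close A (Tf : nat -> tree) (af : nat -> nat) :
  (forall k, 0 < tval (Tf k)) -> (forall k, (k <= af k)%nat) ->
  (forall k, mu (symdiff A (tmem (tgraft k (af k) (Tf k)))) < approx_radius (Tf k) k (af k)) ->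
  complete_Pi03 (Phi A).
Proof.
  intros Tf_pos af_ge A_close. split; [apply Phi_Fsigmadelta|].
  intros B [F [F_closed HB]]. exists (fun x => limit_point Tf af (fsd_events F x)). split.
  - intros x i. exists (S i). intros y Hy. apply Ns_prefix in Hy.
    apply limit_point_ext. intros j Hj. apply fsd_events_prefix.
    apply (prefix_eq_le y x (S j) (S i)); [lia|exact Hy].
  - intros x. rewrite HB, <- (events_diverge_iff F F_closed x). split.
    + apply Phi_limit_point_of_diverge; assumption.
    + apply diverge_of_Phi_limit_point with (Tf := Tf) (af := af); assumption.
Qed.

Definition graft_close (k : nat) (a : MALGpt) : Prop :=
  exists T b, 0 < tval T /\ (k <= b)%nat /\
    mu (symdiff (proj1_sig a) (tmem (tgraft k b T))) < approx_radius T k b.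

Lemma graft_close_open k : malg_open (graft_close k).
Proof.
  intros a [T [b [HT [Hb Hclose]]]].
  exists (approx_radius T k b - mu (symdiff (proj1_sig a) (tmem (tgraft k b T)))).
  split; [lra|]. intros a' Ha'. exists T, b. split; [exact HT|split; [exact Hb|]].
  pose proof (mu_symdiff_triangle (proj1_sig a') (proj1_sig a) (tmem (tgraft k b T))).
  unfold delta in Ha'. fold (symdiff (proj1_sig a) (proj1_sig a')) in Ha'.
  rewrite mu_symdiffC in Ha'. lra.
Qed.

Lemma mu_symdiff_tgraft k a T : mu (symdiff (tmem T) (tmem (tgraft k a T))) <= dyad (S a).
Proof.
  rewrite (mu_ext _ (fun x => tmem T x /\ ~ tmem (tgraft k a T) x))
    by (intros x; pose proof (tmem_tgraft k a T x); unfold symdiff; tauto).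
  pose proof (tmem_measurable (tgraft k a T) (tmem T)) as Hsplit.
  rewrite (mu_ext (fun x => tmem T x /\ tmem (tgraft k a T) x) (tmem (tgraft k a T))) in Hsplit
    by (intros x; pose proof (tmem_tgraft k a T x); tauto).
  rewrite !mu_tmem, tval_tgraft in Hsplit.
  pose proof (tval_gadget_ge k a). pose proof (tval_le1 T). pose proof (tval_le1 (gadget k a)).
  assert (0 <= tval T) by (rewrite <- mu_tmem; apply mu_nonneg). nra.
Qed.

(* Approximate [A] by a clopen set, make it nonnull by adding a small basic set, and
   graft gadgets of large padding: each step moves the set by at most [eps / 3]. *)
Lemma graft_close_dense k : malg_dense (graft_close k).
Proof.
  intros [A HA] eps Heps. simpl.
  destruct (tree_approx A (eps / 3) HA ltac:(lra)) as [T0 H0].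
  destruct (dyad_small (eps / 3) ltac:(lra)) as [p Hp].
  destruct (dyad_small (eps / 3) ltac:(lra)) as [q Hq].
  set (T := tunion T0 (tbasic (repeat false p))).
  assert (H1 : mu (symdiff (tmem T0) (tmem T)) <= dyad p).
  { rewrite <- (repeat_length false p), <- mu_Ns. apply mu_mono. intros x Hx.
    unfold symdiff, T in Hx. rewrite tmem_tunion, tmem_tbasic in Hx. tauto. }
  assert (HT : 0 < tval T).
  { rewrite <- mu_tmem. eapply Rlt_le_trans; [|apply (mu_mono (Ns (repeat false p)))].
    - rewrite mu_Ns. apply dyad_pos.
    - intros x Hx. unfold T. apply tmem_tunion. right. apply tmem_tbasic, Hx. }
  set (g := tgraft k (k + q) T).
  assert (H2 : mu (symdiff (tmem T) (tmem g)) <= dyad q)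
    by (eapply Rle_trans; [apply mu_symdiff_tgraft|apply dyad_le; lia]).
  exists (exist _ (tmem g) (tmem_measurable g)). split.
  - exists T, (k + q)%nat. split; [exact HT|split; [lia|]]. simpl. fold g.
    rewrite mu_symdiff_self. apply dyad_pos.
  - unfold delta. simpl. fold (symdiff A (tmem g)).
    pose proof (mu_symdiff_triangle A (tmem T0) (tmem g)).
    pose proof (mu_symdiff_triangle (tmem T0) (tmem T) (tmem g)). lra.
Qed.

Theorem theorem1p7 :
  malg_comeager (fun a : MALGpt => complete_Pi03 (Phi (proj1_sig a))).
Proof.
  exists graft_close. split; [intros k; split; [apply graft_close_open|apply graft_close_dense]|].
  intros a Ha.
  assert (Hchoice : forall k, {Tb : tree * nat | 0 < tval (fst Tb) /\ (k <= snd Tb)%nat /\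
      mu (symdiff (proj1_sig a) (tmem (tgraft k (snd Tb) (fst Tb)))) < approx_radius (fst Tb) k (snd Tb)}).
  { intros k. apply constructive_indefinite_description.
    destruct (Ha k) as [T [b H]]. exists (T, b). exact H. }
  apply (Phi_complete_of_close _ (fun k => fst (proj1_sig (Hchoice k))) (fun k => snd (proj1_sig (Hchoice k))));
    intros k; apply (proj2_sig (Hchoice k)).
Qed.
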